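(* In the setting of the non-linear gradient flow (i) above, fix two indices $\lambda,\lambda'\in\{1,\dots,r_X\}$ with $y_\lambda>0$, $y_{\lambda'}>0$ and $\tilde y_\lambda\neq\tilde y_{\lambda'}$, and fix $\epsilon\in(0,\theta^\ast_\lambda)$. Suppose the initialization is $\theta^0_\kappa=\sigma\tilde\theta^0_\kappa$ for $\kappa\in\{\lambda,\lambda'\}$, with fixed $\tilde\theta^0_\kappa>0$ and a scale $\sigma>0$ small enough that $\theta^0_\lambda<\theta^\ast_\lambda-\epsilon$ and $\theta^0_{\lambda'}<\theta^\ast_{\lambda'}$. Let $t_\lambda=t_\lambda(\epsilon,\sigma)$ be the (unique) time at which $|\theta_\lambda(t)-\theta^\ast_\lambda|=\epsilon$. Then $$\lim_{\sigma\to 0}\theta_{\lambda'}(t_\lambda)=\begin{cases}\theta^\ast_{\lambda'} & \text{if } \tilde y_{\lambda'}>\tilde y_\lambda,\\ 0 & \text{if } \tilde y_{\lambda'}<\tilde y_\lambda.\end{cases}$$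
   Context: Setting: $\bm X=\sum_{\lambda=1}^{r_X}\sqrt{\mu_\lambda}\bm u_\lambda\bm v_\lambda^\top$ (SVD, $\mu_\lambda>0$ for $\lambda\le r_X$), labels $\bm y$ with $y_\lambda=\bm u_\lambda^\top\bm y\ge0$, $\theta^\ast_\lambda=y_\lambda/\sqrt{\mu_\lambda}$, $\tilde y_\lambda=\sqrt{\mu_\lambda}y_\lambda$. The non-linear dynamics is gradient flow on $\mathbf w$ of $\ell(\mathbf w)=\frac12\|\bm X\bm\theta(\mathbf w)-\bm y\|^2$ with $\bm\theta(\mathbf w)=\frac12\sum_\lambda w_\lambda^2\bm v_\lambda$, whose components are $\theta_\kappa(t)=\dfrac{\theta^0_\kappa\theta^\ast_\kappa}{\theta^0_\kappa-e^{-2\tilde y_\kappa t}(\theta^0_\kappa-\theta^\ast_\kappa)}$ for $\theta^\ast_\kappa\neq0$, where $\theta^0_\kappa=\frac12(w^0_\kappa)^2$. *)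

From mathcomp Require Import all_boot all_order all_algebra.
From mathcomp Require Import all_classical all_reals all_analysis.
Set Implicit Arguments. Unset Strict Implicit. Unset Printing Implicit Defensive.
Import Order.TTheory GRing.Theory Num.Theory.
Local Open Scope ring_scope.

Definition thetastar (R : realType) (r : nat) (mu y : 'I_r -> R) (k : 'I_r) : R :=
  y k / Num.sqrt (mu k).

Definition ytilde (R : realType) (r : nat) (mu y : 'I_r -> R) (k : 'I_r) : R :=
  Num.sqrt (mu k) * y k.

(* Closed-form component of the non-linear gradient flow (case theta*_k <> 0):
   theta_k(t) = th0 * ths / (th0 - exp(-2 yt t) (th0 - ths)), ths = theta star. *)
Definition theta_flow (R : realType) (r : nat) (mu y th0 : 'I_r -> R)
    (k : 'I_r) (t : R) : R :=
  th0 k * thetastar mu y k /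
    (th0 k - expR (- (2 * ytilde mu y k * t)) * (th0 k - thetastar mu y k)).

From mathcomp Require Import all_boot all_order all_algebra.
From mathcomp Require Import all_classical all_reals all_analysis.
From mathcomp Require Import ring lra.
Import Order.TTheory GRing.Theory Num.Theory.
Import numFieldNormedType.Exports.
Set Implicit Arguments.
Unset Strict Implicit.
Unset Printing Implicit Defensive.
Local Open Scope ring_scope.
Local Open Scope classical_set_scope.

(* Each component of the flow is a logistic curve
     theta(t) = x a / (x - E(t) (x - a)),   E(t) = exp(-2 b t),
   with initial value x, target a = theta* and rate b = ytilde.
   1. Starting below the target, the curve stays below it, so the hitting
      condition |theta_l(t) - a| = eps pins the decay factor down exactly:
      E_l(t_l) = x eps / ((a - eps)(a - x)); with x = s c this is s * u(s),
      where u(s) -> u(0) > 0 as the scale s -> 0.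
   2. Since E_{l'}(t) = E_l(t)^k with k = ytilde_{l'} / ytilde_l, the second
      component at the hitting time is the "profile"
        s c' a' / (s c' - s^k w(s) (s c' - a')),   w(s) = u(s)^k -> u(0)^k > 0.
   3. The profile tends to a' when k > 1 (divide through by s) and to 0 when
      0 < k < 1 (divide through by s^k), which gives the two cases. *)

Section LogisticFlow.
Variable R : realType.

Definition logistic (x a b t : R) : R :=
  x * a / (x - expR (- (2 * b * t)) * (x - a)).

Lemma logistic_below_target (x a b t : R) : 0 < x < a -> logistic x a b t < a.
Proof.
case/andP=> x0 xa; rewrite /logistic.
set E := expR _; have E0 : 0 < E := expR_gt0 _.
have gap : 0 < E * (a - x) by rewrite mulr_gt0 // subr_gt0.
have a0 : 0 < a := lt_trans x0 xa.
rewrite ltr_pdivrMr; last by nra.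
nra.
Qed.

Lemma hitting_decay (x a eps b t : R) : 0 < eps -> 0 < x < a - eps ->
  `|logistic x a b t - a| = eps ->
  expR (- (2 * b * t)) = x * eps / ((a - eps) * (a - x)).
Proof.
move=> eps0 /andP[x0 xa] hit.
have below : logistic x a b t < a by apply: logistic_below_target; rewrite x0; lra.
rewrite ltr0_norm ?subr_lt0 // opprB in hit.
move: hit; rewrite /logistic; set E := expR _ => hit.
have E0 : 0 < E := expR_gt0 _.
have D0 : x - E * (x - a) != 0 by rewrite gt_eqF //; nra.
have Z0 : (a - eps) * (a - x) != 0 by rewrite mulf_neq0 // gt_eqF //; lra.
have value : x * a / (x - E * (x - a)) = a - eps by lra.
have cross : E * ((a - eps) * (a - x)) = x * eps.
  have : x * a = (a - eps) * (x - E * (x - a)) by rewrite -value divfK.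
  by move=> h; nra.
by rewrite -cross mulfK.
Qed.

Lemma decay_rescale (b b' t : R) : b != 0 ->
  expR (- (2 * b' * t)) = expR (- (2 * b * t)) `^ (b' / b).
Proof. by move=> b0; rewrite -expRM; congr expR; field. Qed.

(* u(s): the decay factor at the hitting time of the first component,
   divided by the scale s of its initial value s c. *)
Definition hit_factor (a eps c s : R) : R := c * eps / ((a - eps) * (a - s * c)).

Lemma hit_factor_gt0 (a eps c s : R) : 0 < eps -> 0 < c -> 0 <= s ->
  s * c < a - eps -> 0 < hit_factor a eps c s.
Proof.
move=> eps0 c0 s0 sc; have : 0 <= s * c by rewrite mulr_ge0 // ltW.
by move=> sc0; rewrite divr_gt0 ?mulr_gt0 // subr_gt0; lra.
Qed.

Definition profile (c a k : R) (w : R -> R) (s : R) : R :=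
  s * c * a / (s * c - s `^ k * w s * (s * c - a)).

Lemma logistic_at_hitting (a eps c b a' c' b' s t : R) :
  0 < eps -> 0 < c -> 0 < s -> s * c < a - eps -> 0 < b ->
  `|logistic (s * c) a b t - a| = eps ->
  logistic (s * c') a' b' t =
    profile c' a' (b' / b) (fun s => hit_factor a eps c s `^ (b' / b)) s.
Proof.
move=> eps0 c0 s0 sc b0 hit.
have sc0 : 0 < s * c by rewrite mulr_gt0.
have range : 0 < s * c < a - eps by rewrite sc0 sc.
have decay := hitting_decay eps0 range hit.
rewrite /logistic /profile (decay_rescale _ _ (lt0r_neq0 b0)) decay.
have -> : s * c * eps / ((a - eps) * (a - s * c)) = s * hit_factor a eps c s.
  by rewrite /hit_factor !mulrA.
by rewrite powRM ?ltW ?hit_factor_gt0 ?ltW.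
Qed.

Lemma div_rescale (p x y : R) : p != 0 -> (p * x) / (p * y) = x / y.
Proof. by move=> p0; rewrite invfM mulrACA divff // mul1r. Qed.

Lemma cvg_right0_scale (c : R) : s * c @[s --> 0^'+] --> 0.
Proof.
have := cvgM (cvg_at_right_filter (@cvg_id _ (nbhs (0 : R)))) (cvg_cst c).
by rewrite mul0r; apply.
Qed.

Lemma powR_continuous_base (k u : R) : 0 < u -> {for u, continuous (fun x : R => x `^ k)}.
Proof.
move=> u0; apply: differentiable_continuous; apply/derivable1_diffP.
by apply: derivable_powR; rewrite in_itv /= u0.
Qed.

Lemma hit_factor_powR_cvg (k a eps c : R) : 0 < eps -> eps < a -> 0 < c ->
  hit_factor a eps c s `^ k @[s --> 0^'+] --> hit_factor a eps c 0 `^ k.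
Proof.
move=> eps0 epsa c0.
have u0 : 0 < hit_factor a eps c 0 by rewrite hit_factor_gt0 // mul0r subr_gt0.
apply: (continuous_cvg _ (powR_continuous_base (k := k) u0)).
rewrite /hit_factor; apply: cvgM; first exact: cvg_cst.
apply: cvgV; first by rewrite gt_eqF // mul0r subr0 mulr_gt0 ?subr_gt0 //; lra.
apply: cvgM; first exact: cvg_cst.
have := cvgB (cvg_cst a) (cvg_right0_scale c).
by rewrite !(mul0r, subr0); apply.
Qed.

Lemma cvg_right0_gap (c a : R) : s * c - a @[s --> 0^'+] --> - a.
Proof.
by have := cvgB (cvg_right0_scale c) (cvg_cst a); rewrite sub0r; apply.
Qed.

Lemma profile_cvg_target (c a k w0 : R) (w : R -> R) : 1 < k -> 0 < c ->
  w s @[s --> 0^'+] --> w0 -> profile c a k w s @[s --> 0^'+] --> a.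
Proof.
move=> k1 c0 hw.
have reduced : {near 0^'+, (fun s => c * a / (c - s `^ (k - 1) * w s * (s * c - a)))
                          =1 profile c a k w}.
  near=> s; have s0 : 0 < s by near: s; exact: nbhs_right_gt.
  rewrite /profile -(mulr_powRB1 (ltW s0) (lt_trans ltr01 k1)).
  by rewrite -(div_rescale _ _ (lt0r_neq0 s0)); congr (_ / _); ring.
apply: cvg_trans (near_eq_cvg reduced) _.
have value : c * a / (c - 0 * w0 * (- a)) = a.
  by rewrite !mul0r subr0 mulrAC divff ?mul1r ?gt_eqF.
rewrite -[X in cvg_to _ (nbhs X)]value; apply: cvgM; first exact: cvg_cst.
apply: cvgV; first by rewrite !mul0r subr0 gt_eqF.
apply: cvgB; first exact: cvg_cst.
apply: cvgM; last exact: cvg_right0_gap.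
by apply: cvgM => //; apply: powR_cvg0; rewrite subr_gt0.
Unshelve. all: by end_near. Qed.

Lemma profile_cvg_zero (c a k w0 : R) (w : R -> R) : 0 < k < 1 -> 0 < c -> 0 < a ->
  0 < w0 -> w s @[s --> 0^'+] --> w0 -> profile c a k w s @[s --> 0^'+] --> 0.
Proof.
move=> /andP[k0 k1] c0 a0 w00 hw.
have reduced : {near 0^'+, (fun s => s `^ (1 - k) * c * a /
                   (s `^ (1 - k) * c - w s * (s * c - a))) =1 profile c a k w}.
  near=> s; have s0 : 0 < s by near: s; exact: nbhs_right_gt.
  have split_s : s `^ k * s `^ (1 - k) = s.
    rewrite -powRD; last by rewrite lt0r_neq0 ?implybT.
    by rewrite (_ : k + (1 - k) = 1) ?powRr1 ?ltW //; ring.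
  rewrite /profile -(div_rescale _ _ (lt0r_neq0 (powR_gt0 k s0))).
  by congr (_ / _); rewrite ?mulrBr !mulrA split_s.
apply: cvg_trans (near_eq_cvg reduced) _.
have value : 0 * c * a / (0 * c - w0 * (- a)) = 0 by rewrite !mul0r.
rewrite -[X in cvg_to _ (nbhs X)]value.
have one_k : 0 < 1 - k by rewrite subr_gt0.
apply: cvgM; first by apply: cvgM; [apply: cvgM; [exact: powR_cvg0 |] |]; exact: cvg_cst.
apply: cvgV; first by rewrite mul0r sub0r mulrN opprK mulf_neq0 ?gt_eqF.
apply: cvgB; first by apply: cvgM; [exact: powR_cvg0 | exact: cvg_cst].
by apply: cvgM => //; exact: cvg_right0_gap.
Unshelve. all: by end_near. Qed.

End LogisticFlow.

Theorem mainTheorem2 (R : realType) (r : nat) (mu y : 'I_r -> R)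
    (l l' : 'I_r) (eps : R) (th0t : 'I_r -> R) (T : R -> R) :
  (forall k, 0 < mu k) ->
  (forall k, 0 <= y k) ->
  0 < y l -> 0 < y l' ->
  ytilde mu y l != ytilde mu y l' ->
  0 < eps -> eps < thetastar mu y l ->
  0 < th0t l -> 0 < th0t l' ->
  (* T s is the time t_lambda(eps, s) at which |theta_l(t) - theta*_l| = eps,
     for every admissible scale s *)
  (forall s : R, 0 < s ->
     s * th0t l < thetastar mu y l - eps ->
     s * th0t l' < thetastar mu y l' ->
     `|theta_flow mu y (fun k => s * th0t k) l (T s) - thetastar mu y l| = eps) ->
  (ytilde mu y l < ytilde mu y l' ->
     theta_flow mu y (fun k => s * th0t k) l' (T s) @[s --> (0 : R)^'+]
       --> (thetastar mu y l' : R)) /\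
  (ytilde mu y l' < ytilde mu y l ->
     theta_flow mu y (fun k => s * th0t k) l' (T s) @[s --> (0 : R)^'+] --> (0 : R)).
Proof.
move=> mu0 _ yl0 yl'0 _ eps0 epsa c0 c'0 hit.
have a'0 : 0 < thetastar mu y l' by rewrite divr_gt0 // sqrtr_gt0.
have b0 : 0 < ytilde mu y l by rewrite mulr_gt0 // sqrtr_gt0.
have b'0 : 0 < ytilde mu y l' by rewrite mulr_gt0 // sqrtr_gt0.
set rate := ytilde mu y l' / ytilde mu y l.
set w := fun s => hit_factor (thetastar mu y l) eps (th0t l) s `^ rate.
have as_profile : {near 0^'+, profile (th0t l') (thetastar mu y l') rate w =1
    (fun s => theta_flow mu y (fun k => s * th0t k) l' (T s))}.
  near=> s; have s0 : 0 < s by near: s; exact: nbhs_right_gt.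
  have small : s * th0t l < thetastar mu y l - eps.
    by rewrite -ltr_pdivlMr //; near: s; apply: nbhs_right_lt; rewrite divr_gt0 ?subr_gt0.
  have small' : s * th0t l' < thetastar mu y l'.
    by rewrite -ltr_pdivlMr //; near: s; apply: nbhs_right_lt; rewrite divr_gt0.
  exact: esym (logistic_at_hitting (thetastar mu y l') (th0t l') (ytilde mu y l')
    eps0 c0 s0 small b0 (hit s s0 small small')).
have hw := hit_factor_powR_cvg (k := rate) eps0 epsa c0.
split=> rates; apply: cvg_trans (near_eq_cvg as_profile) _.
- apply: (profile_cvg_target _ c'0 hw).
  by rewrite ltr_pdivlMr // mul1r.
- apply: (profile_cvg_zero _ c'0 a'0 _ hw).
  + by rewrite divr_gt0 //= ltr_pdivrMr // mul1r.
  + by rewrite powR_gt0 // hit_factor_gt0 // mul0r subr_gt0.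
Unshelve. all: by end_near. Qed.
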